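(* Let $G$ be an abelian group, let $n\geq 1$, let $X\subseteq G$ be a finite, nonempty subset, let $\mathscr A=A_1\cdot\ldots\cdot A_n$ be a setpartition over $G$, let $H=\mathsf H(X+\sum_{i=1}^{n}A_i)$ and let $Z=\bigcap_{i=1}^n(A_i+H)$. Suppose $\sum_{i=1}^{n}|A_i|\leq 2n$, $|A_i\setminus Z|\leq 1$ for all $i\in [1,n]$, and $|X+\sum_{i=1}^{n}A_i|< |X+H|+\big(\sum_{i=1}^{n}|A_i|-n\big)|H|$. Then $H$ is nontrivial and $Z=\alpha+H$ for some $\alpha\in G$.
   Context: A setpartition over $G$ is a finite unordered list $\mathscr A=A_1\cdot\ldots\cdot A_n$ of finite nonempty subsets of $G$. $\mathsf H(A)=\{g\in G:g+A=A\}$ is the stabilizer. Sumsets $A_1+\dots+A_n=\{a_1+\dots+a_n:a_i\in A_i\}$. *)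

From HB Require Import structures.
From mathcomp Require Import all_boot all_algebra.
From mathcomp Require Export finmap.
Set Implicit Arguments. Unset Strict Implicit. Unset Printing Implicit Defensive.
Import GRing.Theory.
Local Open Scope fset_scope.
Local Open Scope ring_scope.

Definition fsumset (G : zmodType) (A B : {fset G}) : {fset G} :=
  [fset a + b | a in A, b in B].

Definition sumsets (G : zmodType) (s : seq {fset G}) : {fset G} :=
  foldr (@fsumset G) [fset (0 : G)] s.

Definition ftranslate (G : zmodType) (g : G) (A : {fset G}) : {fset G} :=
  [fset g + a | a in A].

From mathcomp Require Import all_boot all_algebra finmap zify.

(* Kneser-type growth: if Y is a union of H-cosets and every period of Y + B
   lies in H, then |Y + B| >= |Y| + |H| as soon as B meets two cosets a + H and
   a' + H, since a + Y is disjoint from some coset y + a' + H inside Y + B.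
   Adding A_1, ..., A_n one at a time to X + H, the bound on |X + sum A_i|
   leaves fewer than sum |A_i| - n indices i for which A_i meets two H-cosets.
   As sum |A_i| <= 2n, some A_i lies in one coset, so Z, which is contained in
   every A_i + H, lies in one coset z + H and, being H-periodic, equals it; Z is
   nonempty since otherwise |A_i| <= 1 for all i. If H were trivial, Z would be
   a point and |A_i| <= 1 + [A_i meets two cosets] for all i, which the count
   forbids. *)
Set Implicit Arguments.
Unset Strict Implicit.
Unset Printing Implicit Defensive.
Import GRing.Theory.
Local Open Scope fset_scope.
Local Open Scope ring_scope.

Section Sumsets.
Variable G : zmodType.
Implicit Types A B Y : {fset G}.

Lemma fsumsetP A B x :
  reflect (exists a b, [/\ a \in A, b \in B & x = a + b]) (x \in fsumset A B).
Proof.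
apply: (iffP idP) => [/imfset2P [a ha [b hb ->]]|[a [b [ha hb ->]]]].
  by exists a, b.
by apply/imfset2P; exists a => //; exists b.
Qed.

Lemma mem_fsumset A B a b : a \in A -> b \in B -> a + b \in fsumset A B.
Proof. by move=> ha hb; apply/fsumsetP; exists a, b. Qed.

Lemma mem_ftranslate g A x : (x \in ftranslate g A) = (x - g \in A).
Proof.
apply/imfsetP/idP => [[a ha ->]|h]; first by rewrite addrC addKr.
by exists (x - g) => //; rewrite addrC subrK.
Qed.

Lemma card_ftranslate g A : #|` ftranslate g A| = #|` A|.
Proof. by rewrite card_imfset //= => x y /addrI. Qed.

Lemma fsumsetC A B : fsumset A B = fsumset B A.
Proof.
by apply/fsetP => x; apply/fsumsetP/fsumsetP => -[a [b [ha hb ->]]];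
  exists b, a; rewrite addrC.
Qed.

Lemma fsumsetA A B Y : fsumset A (fsumset B Y) = fsumset (fsumset A B) Y.
Proof.
apply/fsetP => x; apply/fsumsetP/fsumsetP.
  move=> [a [_ [ha /fsumsetP [b [y [hb hy ->]]] ->]]].
  by exists (a + b), y; rewrite addrA mem_fsumset.
move=> [_ [y [/fsumsetP [a [b [ha hb ->]]] hy ->]]].
by exists a, (b + y); rewrite addrA mem_fsumset.
Qed.

Lemma fsumset0 A : fsumset A [fset 0] = A.
Proof.
apply/fsetP => x; apply/fsumsetP/idP => [[a [_ [ha /fset1P -> ->]]]|hx].
  by rewrite addr0.
by exists x, 0; rewrite addr0 fset11.
Qed.

Lemma leq_card_fsumset Y B b : b \in B -> (#|` Y| <= #|` fsumset Y B|)%N.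
Proof.
move=> hb; rewrite -(card_ftranslate b Y); apply/fsubset_leq_card/fsubsetP => x.
by rewrite mem_ftranslate => hx; rewrite -(subrK b x) mem_fsumset.
Qed.

Definition period Y : pred G := fun g => all (fun y => g + y \in Y) Y.

Lemma periodP Y g : reflect (ftranslate g Y = Y) (period Y g).
Proof.
apply: (iffP allP) => [hg|eg y]; last first.
  by rewrite -{2}eg => hy; apply/imfsetP; exists y.
apply/eqP; rewrite eqEfcard card_ftranslate leqnn andbT.
by apply/fsubsetP => x /imfsetP [y hy ->]; apply: hg.
Qed.

Lemma stabilizer_period (H Y : {fset G}) :
  (forall g, g \in H <-> ftranslate g Y = Y) -> H =i period Y.
Proof. by move=> stabY g; apply/idP/periodP => /stabY. Qed.

Lemma period_zmod_closed Y : zmod_closed (period Y).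
Proof.
split; first by apply/allP => y; rewrite add0r.
move=> g h /allP hg /periodP eh; apply/allP => y hy.
have hyh : y - h \in Y by rewrite -mem_ftranslate eh.
by rewrite -addrA [- h + y]addrC hg.
Qed.

Lemma period_fsumset Y B g : period Y g -> period (fsumset Y B) g.
Proof.
move=> /allP hg; apply/allP => _ /fsumsetP [y [b [hy hb ->]]].
by rewrite addrA mem_fsumset ?hg.
Qed.

End Sumsets.

Section CosetGrowth.
Variables (G : zmodType) (H : {fset G}).
Hypothesis subgroupH : zmod_closed [in H].
Implicit Types (B Y : {fset G}) (L : seq {fset G}).

Let memH0 : 0 \in H. Proof. exact: subgroupH.1. Qed.
Let memHB : {in H &, forall g h, g - h \in H}. Proof. exact: subgroupH.2. Qed.
Let memHN : {in H, forall h, - h \in H}.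
Proof. by move=> h hh; rewrite -sub0r memHB. Qed.
Let memHD : {in H &, forall g h, g + h \in H}.
Proof. by move=> g h hg hh; rewrite -[h]opprK memHB ?memHN. Qed.

Definition meets_two_cosets B := has (fun a => has (fun a' => a' - a \notin H) B) B.

Lemma meets_two_cosetsP B :
  reflect (exists a a', [/\ a \in B, a' \in B & a' - a \notin H])
          (meets_two_cosets B).
Proof.
apply: (iffP idP) => [/hasP [a ha /hasP [a' ha' hn]]|[a [a' [ha ha' hn]]]].
  by exists a, a'.
by apply/hasP; exists a => //; apply/hasP; exists a'.
Qed.

Lemma fsubset_coset B a : ~~ meets_two_cosets B -> a \in B -> B `<=` ftranslate a H.
Proof.
move=> hB ha; apply/fsubsetP => a' ha'; rewrite mem_ftranslate.
by apply: contraNT hB => hn; apply/meets_two_cosetsP; exists a, a'.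
Qed.

Lemma meets_two_cosets_fsumset B z w :
  z \in fsumset B H -> w \in fsumset B H -> w - z \notin H -> meets_two_cosets B.
Proof.
move=> /fsumsetP [a [h [ha hh ->]]] /fsumsetP [a' [h' [ha' hh' ->]]] hn.
apply/meets_two_cosetsP; exists a, a'; split=> //; apply: contra hn => hd.
by rewrite opprD addrACA memHD // memHB.
Qed.

Lemma fsumset_subgroup Y : {subset H <= period Y} -> fsumset Y H = Y.
Proof.
move=> perY; apply/fsetP => x; apply/fsumsetP/idP => [[y [h [hy hh ->]]]|hx].
  by rewrite addrC; apply: (allP (perY h hh)).
by exists x, 0; rewrite addr0.
Qed.

Lemma period_fsumset_subgroup Y : {subset H <= period (fsumset Y H)}.
Proof.
move=> g hg; apply/allP => _ /fsumsetP [y [h [hy hh ->]]].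
by rewrite addrCA mem_fsumset ?memHD.
Qed.

Lemma card_fsumset_growth Y B :
  {subset H <= period Y} -> B != fset0 -> {subset period (fsumset Y B) <= H} ->
  (#|` Y| + meets_two_cosets B * #|` H| <= #|` fsumset Y B|)%N.
Proof.
move=> perY /fset0Pn [b hb] stabYB.
have [/meets_two_cosetsP [a [a' [ha ha' hn]]]|_] := boolP (meets_two_cosets B);
  last by rewrite mul0n addn0 (leq_card_fsumset _ hb).
have [y hy hny] : exists2 y, y \in Y & a' - a + y \notin Y.
  apply/allPn; apply: contra hn => hper.
  by apply/stabYB/period_fsumset.
have disj : [disjoint ftranslate a Y & ftranslate (y + a') H]%fset.
  apply/fdisjointP => x; rewrite !mem_ftranslate => hxa.
  apply: contra hny => hxh.
  have -> : a' - a + y = - (x - (y + a')) + (x - a).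
    by rewrite opprB [RHS]addrA subrK (addrC y) addrAC.
  exact: (allP (perY _ (memHN hxh))).
have /eqP card_union :
    #|` ftranslate a Y `|` ftranslate (y + a') H| == (#|` Y| + #|` H|)%N.
  by rewrite -(card_ftranslate a Y) -(card_ftranslate (y + a') H)
             (leq_card_fsetU _ _).2.
rewrite mul1n -card_union; apply/fsubset_leq_card/fsubsetP => x.
rewrite in_fsetU !mem_ftranslate => /orP [hx|hx].
  by rewrite -(subrK a x) mem_fsumset.
rewrite -(subrK a' x) -(subrK y (x - a')) mem_fsumset //.
by rewrite (allP (perY _ _)) // addrAC -addrA -opprD.
Qed.

Lemma card_sumsets_growth L Y :
  {subset H <= period Y} -> all (fun B => B != fset0) L ->
  {subset period (fsumset Y (sumsets L)) <= H} ->
  (#|` Y| + count meets_two_cosets L * #|` H| <= #|` fsumset Y (sumsets L)|)%N.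
Proof.
elim: L Y => [|B L IH] Y perY; first by rewrite /= mul0n addn0 fsumset0.
rewrite [sumsets _]/= fsumsetA => /andP [hB hL] stabYBL.
have perYB : {subset H <= period (fsumset Y B)}.
  by move=> h /perY /period_fsumset; apply.
have stabYB : {subset period (fsumset Y B) <= H}.
  by move=> g /(period_fsumset (sumsets L)) /stabYBL.
rewrite /= mulnDl addnA (leq_trans _ (IH _ perYB hL stabYBL)) // leq_add2r.
exact: card_fsumset_growth.
Qed.

End CosetGrowth.

Section Setpartition.
Variables (G : zmodType) (n : nat) (X : {fset G}) (A : 'I_n -> {fset G}).
Variables (H Z : {fset G}).
Let L := [seq A i | i <- enum 'I_n].
Let S := fsumset X (sumsets L).
Let spread := (\sum_(i < n) meets_two_cosets H (A i))%N.
Let excess := (\sum_(i < n) #|` A i| - n)%N.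

Hypothesis A_neq0 : forall i, A i != fset0.
Hypothesis stabS : H =i period S.
Hypothesis memZ : forall z, z \in Z <-> (forall i, z \in fsumset (A i) H).
Hypothesis sumA_le : (\sum_(i < n) #|` A i| <= 2 * n)%N.
Hypothesis cardS_lt : (#|` S| < #|` fsumset X H| + excess * #|` H|)%N.

Let subgroupH : zmod_closed [in H].
Proof.
have [period0 periodB] := period_zmod_closed S.
by split=> [|g h]; rewrite /= ?stabS //; apply: periodB.
Qed.

Lemma spread_lt_excess : (spread < excess)%N.
Proof.
have perXH := period_fsumset_subgroup subgroupH X.
have eS : fsumset (fsumset X H) (sumsets L) = S.
  rewrite -fsumsetA (fsumsetC H) fsumsetA fsumset_subgroup // => h.
  by rewrite stabS.
have allA : all (fun B => B != fset0) L by apply/allP => _ /mapP [i _ ->].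
have stabXHL : {subset period (fsumset (fsumset X H) (sumsets L)) <= H}.
  by rewrite eS => g; rewrite stabS.
have := card_sumsets_growth subgroupH perXH allA stabXHL.
rewrite eS count_map -sum1_count big_mkcond big_enum /= -/spread => growth.
rewrite ltnNge; apply: contraL cardS_lt => le_excess.
by rewrite -leqNgt (leq_trans _ growth) // leq_add2l leq_mul.
Qed.

Lemma not_all_card_le_meets_two_cosets :
  ~ (forall i, #|` A i| <= 1 + meets_two_cosets H (A i))%N.
Proof.
move=> small; have := spread_lt_excess.
have : (\sum_(i < n) #|` A i| <= \sum_(i < n) (1 + meets_two_cosets H (A i)))%N.
  by apply: leq_sum => i _.
rewrite big_split sum_nat_const card_ord muln1 /= -/spread => le_sum.
by rewrite ltnNge leq_subLR le_sum.
Qed.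

Lemma not_all_meet_two_cosets : ~ (forall i, meets_two_cosets H (A i)).
Proof.
move=> all2; have := spread_lt_excess; rewrite /spread /excess.
under eq_bigr do rewrite all2.
rewrite sum_nat_const card_ord; lia.
Qed.

Hypothesis cardAZ : forall i, (#|` A i `\` Z| <= 1)%N.

Lemma Z_neq0 : Z != fset0.
Proof.
apply/eqP => Z0; apply: not_all_card_le_meets_two_cosets => i.
by apply: leq_trans (leq_addr _ _); rewrite -(fsetD0 (A i)) -Z0.
Qed.

Lemma Z_sub_coset z w : z \in Z -> w \in Z -> w - z \in H.
Proof.
move=> /memZ hz /memZ hw; apply: contraT => hn; exfalso.
apply: not_all_meet_two_cosets => i.
exact: meets_two_cosets_fsumset (hz i) (hw i) hn.
Qed.

Lemma Z_coset z : z \in Z -> Z = ftranslate z H.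
Proof.
move=> hz; apply/fsetP => w; rewrite mem_ftranslate.
apply/idP/idP => [/(Z_sub_coset hz)//|hw]; apply/memZ => i.
rewrite -(subrK z w); apply: (allP (period_fsumset_subgroup subgroupH _ hw)).
exact: (memZ z).1.
Qed.

Lemma H_neq0 : H != [fset 0].
Proof.
apply/eqP => H0; have /fset0Pn [z hz] := Z_neq0.
have cardZ : #|` Z| = 1%N by rewrite (Z_coset hz) card_ftranslate H0 cardfs1.
apply: not_all_card_le_meets_two_cosets => i.
have [_|one] := boolP (meets_two_cosets H (A i)).
  rewrite -(cardfsID Z) addnC leq_add //.
  by rewrite (leq_trans (fsubset_leq_card (fsubsetIr _ _))) ?cardZ.
have /fset0Pn [a ha] := A_neq0 i.
rewrite addn0 (leq_trans (fsubset_leq_card (fsubset_coset one ha))) //.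
by rewrite card_ftranslate H0 cardfs1.
Qed.

End Setpartition.

Theorem lemma3p1 (G : zmodType) (n : nat) (X : {fset G}) (A : 'I_n -> {fset G})
    (H Z : {fset G}) :
  (1 <= n)%N ->
  X != fset0 ->
  (forall i, A i != fset0) ->
  (* H = stabilizer of S := X + A_1 + ... + A_n *)
  (forall g : G, g \in H <->
     ftranslate g (fsumset X (sumsets [seq A i | i <- enum 'I_n]))
     = fsumset X (sumsets [seq A i | i <- enum 'I_n])) ->
  (* Z = intersection over i of (A_i + H) *)
  (forall z : G, z \in Z <-> (forall i, z \in fsumset (A i) H)) ->
  (\sum_(i < n) #|` A i| <= 2 * n)%N ->
  (forall i, (#|` A i `\` Z| <= 1)%N) ->
  (#|` fsumset X (sumsets [seq A i | i <- enum 'I_n])|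
     < #|` fsumset X H| + ((\sum_(i < n) #|` A i|) - n) * #|` H|)%N ->
  H != [fset (0 : G)] /\ exists alpha : G, Z = ftranslate alpha H.
Proof.
move=> _ _ A_neq0 /stabilizer_period stabS memZ sumA_le cardAZ cardS_lt.
split; first exact: H_neq0 A_neq0 stabS memZ sumA_le cardS_lt cardAZ.
have /fset0Pn [z hz] := Z_neq0 A_neq0 stabS cardS_lt cardAZ.
by exists z; apply: Z_coset A_neq0 stabS memZ sumA_le cardS_lt _ hz.
Qed.
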